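(* Let $G$ be a connected graph on $n\ge2$ vertices, $\alpha\in\mathbb{R}$, with vertices labeled so that, writing $s_k=({}^\alpha\mathbb{M})_k+\mathbb{D}_k$, we have $s_1\ge s_2\ge\cdots\ge s_n$. Let $M=\max_{1\le i\le n}\mathbb{D}_i$ and $N=\max_{1\le i\ne j\le n}d_{ij}\mathbb{D}_j^\alpha/\mathbb{D}_i^\alpha$. Then for $1\le i\le n$, \[\rho(\mathbb{DQ}(G))\le \frac{s_i+M-N+\sqrt{(s_i-M+N)^2+4N\sum_{k=1}^{i-1}(s_k-s_i)}}{2}.\] Equality holds if and only if $s_1=\cdots=s_n$, or for some $2\le t\le i$: (i) $\mathbb{D}_k=M$ for $1\le k\le t-1$; (ii) $d_{kl}\mathbb{D}_l^\alpha/\mathbb{D}_k^\alpha=N$ for all $1\le k\le n$, $1\le l\le t-1$, $k\ne l$; (iii) $s_t=\cdots=s_n$.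
   Context: $\mathbb{D}(G)=(d_{ij})$ is the distance matrix of $G$, $\mathbb{D}_i=\sum_j d_{ij}$ the transmission of $v_i$, and $\mathbb{DQ}(G)=\mathrm{diag}(\mathbb{D}_1,\dots,\mathbb{D}_n)+\mathbb{D}(G)$ the distance signless Laplacian matrix. $({}^\alpha\mathbb{M})_i=\frac{\sum_{j=1}^n d_{ij}\mathbb{D}_j^\alpha}{\mathbb{D}_i^\alpha}$ is the generalized average transmission. $\rho$ is the spectral radius. An empty sum equals $0$. *)

From Stdlib Require Import Reals List Arith Bool.
Import ListNotations.
Open Scope R_scope.

(* Vertices are 0, ..., n-1; the graph is a boolean adjacency relation. *)

Fixpoint sumR (n : nat) (f : nat -> R) : R :=
  match n with
  | O => 0
  | S m => sumR m f + f m
  end.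

Definition simple_graph (n : nat) (adj : nat -> nat -> bool) : Prop :=
  (forall i j, (i < n)%nat -> (j < n)%nat -> adj i j = adj j i) /\
  (forall i, (i < n)%nat -> adj i i = false).

Fixpoint reach (n : nat) (adj : nat -> nat -> bool) (k i j : nat) : bool :=
  match k with
  | O => Nat.eqb i j
  | S k' => existsb (fun l => andb (adj i l) (reach n adj k' l j)) (seq 0 n)
  end.

Definition connected (n : nat) (adj : nat -> nat -> bool) : Prop :=
  forall i j, (i < n)%nat -> (j < n)%nat -> exists k, reach n adj k i j = true.

Fixpoint dist_aux (n : nat) (adj : nat -> nat -> bool) (i j k fuel : nat) : nat :=
  match fuel with
  | O => k
  | S f => if reach n adj k i j then k else dist_aux n adj i j (S k) f
  end.

(* graph distance d_ij (for connected graphs on n vertices it is < n) *)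
Definition dist (n : nat) (adj : nat -> nat -> bool) (i j : nat) : nat :=
  dist_aux n adj i j 0 n.

Definition trans (n : nat) (adj : nat -> nat -> bool) (i : nat) : R :=
  sumR n (fun j => INR (dist n adj i j)).

Definition DQ (n : nat) (adj : nat -> nat -> bool) (i j : nat) : R :=
  (if Nat.eqb i j then trans n adj i else 0) + INR (dist n adj i j).

Definition wratio (n : nat) (adj : nat -> nat -> bool) (alpha : R) (i j : nat) : R :=
  INR (dist n adj i j) * Rpower (trans n adj j) alpha / Rpower (trans n adj i) alpha.

Definition genavg (n : nat) (adj : nat -> nat -> bool) (alpha : R) (i : nat) : R :=
  sumR n (fun j => wratio n adj alpha i j).

Definition sval (n : nat) (adj : nat -> nat -> bool) (alpha : R) (i : nat) : R :=
  genavg n adj alpha i + trans n adj i.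

Definition maxTr (n : nat) (adj : nat -> nat -> bool) : R :=
  fold_right Rmax (trans n adj 0) (map (trans n adj) (seq 0 n)).

Definition maxRatio (n : nat) (adj : nat -> nat -> bool) (alpha : R) : R :=
  fold_right Rmax (wratio n adj alpha 0 1)
    (flat_map (fun i => map (fun j => wratio n adj alpha i j)
                            (filter (fun j => negb (Nat.eqb i j)) (seq 0 n)))
              (seq 0 n)).

Definition eigenvalue (n : nat) (A : nat -> nat -> R) (lam : R) : Prop :=
  exists x : nat -> R,
    (exists i, (i < n)%nat /\ x i <> 0) /\
    (forall i, (i < n)%nat -> sumR n (fun j => A i j * x j) = lam * x i).

(* r is the spectral radius of A (A symmetric, so all eigenvalues are real) *)
Definition is_spectral_radius (n : nat) (A : nat -> nat -> R) (r : R) : Prop :=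
  (exists lam, eigenvalue n A lam /\ Rabs lam = r) /\
  (forall lam, eigenvalue n A lam -> Rabs lam <= r).

(* the upper bound for (0-indexed) vertex i *)
Definition bound7 (n : nat) (adj : nat -> nat -> bool) (alpha : R) (i : nat) : R :=
  let s := sval n adj alpha in
  let M := maxTr n adj in
  let N := maxRatio n adj alpha in
  (s i + M - N +
   sqrt ((s i - M + N) ^ 2 + 4 * N * sumR i (fun k => s k - s i))) / 2.

From Pilot Require Import Defs.
From Stdlib Require Import Reals List Arith Lia Lra Psatz Classical.
Open Scope R_scope.

(* Conjugating DQ by diag(D_k^alpha) gives a matrix B with the same spectrum,
   diagonal D_k <= M, off-diagonal entries d_kl D_l^alpha / D_k^alpha in (0, N]
   and row sums s_k.  Let rho be the claimed bound and y = 1 + e the test vector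
   with e_l = (s_l - s_i) / (rho - M + N) for l < i and e_l = 0 otherwise; rho is
   chosen so that N * sum_l e_l = rho - s_i, and then the entry bounds give
   B y <= rho y, with zero slack exactly under the stated conditions.  Comparing
   an eigenvector u with y at the index maximising |u_l| / y_l gives |lambda| <= rho
   (Collatz-Wielandt), and |lambda| = rho forces B y = rho y because B has positive
   off-diagonal entries; conversely B y = rho y makes rho an eigenvalue. *)

Lemma sumR_ext n f g :
  (forall k, (k < n)%nat -> f k = g k) -> sumR n f = sumR n g.
Proof.
  induction n as [|n IH]; intros H; simpl; [reflexivity|].
  rewrite IH by (intros; apply H; lia). rewrite H by lia. reflexivity.
Qed.

Lemma sumR_le n f g :
  (forall k, (k < n)%nat -> f k <= g k) -> sumR n f <= sumR n g.
Proof.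
  induction n as [|n IH]; intros H; simpl; [lra|].
  assert (sumR n f <= sumR n g) by (apply IH; intros; apply H; lia).
  assert (f n <= g n) by (apply H; lia).
  lra.
Qed.

Lemma sumR_le_eq n f g :
  (forall k, (k < n)%nat -> f k <= g k) -> sumR n f = sumR n g ->
  forall k, (k < n)%nat -> f k = g k.
Proof.
  induction n as [|n IH]; simpl; intros Hle Heq k Hk; [lia|].
  assert (sumR n f <= sumR n g) by (apply sumR_le; intros; apply Hle; lia).
  assert (f n <= g n) by (apply Hle; lia).
  destruct (Nat.eq_dec k n) as [->|Hkn]; [lra|].
  apply IH; [intros; apply Hle; lia | lra | lia].
Qed.

Lemma sumR_plus n f g : sumR n (fun k => f k + g k) = sumR n f + sumR n g.
Proof. induction n as [|n IH]; simpl; [lra|]. rewrite IH. lra. Qed.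

Lemma sumR_minus n f g : sumR n (fun k => f k - g k) = sumR n f - sumR n g.
Proof. induction n as [|n IH]; simpl; [lra|]. rewrite IH. lra. Qed.

Lemma sumR_scal n c f : sumR n (fun k => c * f k) = c * sumR n f.
Proof. induction n as [|n IH]; simpl; [lra|]. rewrite IH. lra. Qed.

Lemma sumR_const0 n : sumR n (fun _ => 0) = 0.
Proof. induction n as [|n IH]; simpl; lra. Qed.

Lemma sumR_nonneg n f : (forall k, (k < n)%nat -> 0 <= f k) -> 0 <= sumR n f.
Proof. intros H. rewrite <- (sumR_const0 n). apply sumR_le, H. Qed.

Lemma sumR_nonneg_eq0 n f :
  (forall k, (k < n)%nat -> 0 <= f k) -> sumR n f = 0 ->
  forall k, (k < n)%nat -> f k = 0.
Proof.
  intros H H0 k Hk. symmetry.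
  apply (sumR_le_eq n (fun _ => 0) f); [exact H | rewrite sumR_const0; auto | exact Hk].
Qed.

Lemma sumR_kronecker n k a :
  (k < n)%nat -> sumR n (fun l => if Nat.eqb k l then a else 0) = a.
Proof.
  induction n as [|n IH]; simpl; intros Hk; [lia|].
  destruct (Nat.eqb_spec k n) as [->|Hkn].
  - rewrite (sumR_ext n _ (fun _ => 0)), sumR_const0; [lra|].
    intros l Hl. destruct (Nat.eqb_spec n l); [lia | reflexivity].
  - rewrite IH by lia. lra.
Qed.

Lemma sumR_prefix n m f :
  (m <= n)%nat -> (forall l, (m <= l < n)%nat -> f l = 0) -> sumR n f = sumR m f.
Proof.
  induction n as [|n IH]; intros Hm H.
  - replace m with 0%nat by lia. reflexivity.
  - destruct (Nat.eq_dec m (S n)) as [->|Hmn]; [reflexivity|].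
    simpl. rewrite IH by (lia || (intros; apply H; lia)). rewrite (H n) by lia. lra.
Qed.

Lemma sumR_ge_term n f k :
  (forall l, (l < n)%nat -> 0 <= f l) -> (k < n)%nat -> f k <= sumR n f.
Proof.
  induction n as [|n IH]; simpl; intros H Hk; [lia|].
  assert (0 <= sumR n f) by (apply sumR_nonneg; intros; apply H; lia).
  assert (0 <= f n) by (apply H; lia).
  destruct (Nat.eq_dec k n) as [->|Hkn]; [lra|].
  assert (f k <= sumR n f) by (apply IH; [intros; apply H; lia | lia]).
  lra.
Qed.

Lemma Rabs_sumR n f : Rabs (sumR n f) <= sumR n (fun l => Rabs (f l)).
Proof.
  induction n as [|n IH]; simpl; [rewrite Rabs_R0; lra|].
  eapply Rle_trans; [apply Rabs_triang | lra].
Qed.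

Lemma exists_argmax n (f : nat -> R) :
  (1 <= n)%nat -> exists p, (p < n)%nat /\ forall l, (l < n)%nat -> f l <= f p.
Proof.
  induction n as [|n IH]; intros Hn; [lia|].
  destruct (Nat.eq_dec n 0) as [->|Hn0].
  - exists 0%nat. split; [lia|]. intros l Hl. replace l with 0%nat by lia. lra.
  - destruct IH as [p [Hp Hmax]]; [lia|].
    destruct (Rle_dec (f n) (f p)) as [Hnp|Hnp].
    + exists p. split; [lia|]. intros l Hl.
      destruct (Nat.eq_dec l n) as [->|]; [lra | apply Hmax; lia].
    + exists n. split; [lia|]. intros l Hl.
      destruct (Nat.eq_dec l n) as [->|]; [lra|].
      assert (f l <= f p) by (apply Hmax; lia). lra.
Qed.

Lemma exists_least (P : nat -> Prop) m :
  P m -> exists t, (t <= m)%nat /\ P t /\ forall l, (l < t)%nat -> ~ P l.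
Proof.
  induction m as [m IH] using lt_wf_ind; intros Pm.
  destruct (classic (exists l, (l < m)%nat /\ P l)) as [[l [Hl Pl]]|Hnone].
  - destruct (IH l Hl Pl) as (t & Htl & Pt & Hmin).
    exists t. repeat split; [lia | exact Pt | exact Hmin].
  - exists m. repeat split; [lia | exact Pm|].
    intros l Hl Pl. apply Hnone. exists l. auto.
Qed.

Section Supervector.

Variables (n : nat) (A : nat -> nat -> R) (y : nat -> R) (rho : R).
Hypothesis A_nonneg : forall k l, (k < n)%nat -> (l < n)%nat -> 0 <= A k l.
Hypothesis A_offdiag_pos :
  forall k l, (k < n)%nat -> (l < n)%nat -> k <> l -> 0 < A k l.
Hypothesis y_pos : forall k, (k < n)%nat -> 0 < y k.
Hypothesis y_super :
  forall k, (k < n)%nat -> sumR n (fun l => A k l * y l) <= rho * y k.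

Section Eigenvector.

Variables (lam : R) (u : nat -> R).
Hypothesis u_nonzero : exists k, (k < n)%nat /\ u k <> 0.
Hypothesis u_eigen :
  forall k, (k < n)%nat -> sumR n (fun l => A k l * u l) = lam * u k.

Lemma abs_eigen_row k :
  (k < n)%nat -> Rabs lam * Rabs (u k) <= sumR n (fun l => A k l * Rabs (u l)).
Proof.
  intros Hk. rewrite <- Rabs_mult, <- u_eigen by exact Hk.
  eapply Rle_trans; [apply Rabs_sumR | right; apply sumR_ext].
  intros l Hl. rewrite Rabs_mult, (Rabs_right (A k l)); [reflexivity|].
  apply Rle_ge, A_nonneg; assumption.
Qed.

Lemma eigen_ratio_max :
  exists p c, (p < n)%nat /\ 0 < c /\ Rabs (u p) = c * y p /\
    forall l, (l < n)%nat -> Rabs (u l) <= c * y l.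
Proof.
  destruct u_nonzero as [k0 [Hk0 Hu0]].
  destruct (exists_argmax n (fun l => Rabs (u l) / y l)) as [p [Hp Hmax]]; [lia|].
  exists p, (Rabs (u p) / y p). pose proof (y_pos p Hp).
  repeat split; [exact Hp | | field; lra |].
  - pose proof (Hmax k0 Hk0). pose proof (y_pos k0 Hk0).
    assert (0 < Rabs (u k0) / y k0).
    { apply Rdiv_pos_pos; [apply Rabs_pos_lt, Hu0 | lra]. }
    lra.
  - intros l Hl. pose proof (Hmax l Hl). pose proof (y_pos l Hl).
    replace (Rabs (u l)) with (Rabs (u l) / y l * y l) by (field; lra).
    apply Rmult_le_compat_r; lra.
Qed.

Lemma abs_eigen_row_le k c :
  (k < n)%nat -> (forall l, (l < n)%nat -> Rabs (u l) <= c * y l) ->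
  sumR n (fun l => A k l * Rabs (u l)) <= c * sumR n (fun l => A k l * y l).
Proof.
  intros Hk Hle. rewrite <- sumR_scal. apply sumR_le. intros l Hl.
  pose proof (A_nonneg k l Hk Hl). pose proof (Hle l Hl). nra.
Qed.

Lemma abs_eigen_le_rho : Rabs lam <= rho.
Proof.
  destruct eigen_ratio_max as (p & c & Hp & Hc & Hup & Hle).
  pose proof (abs_eigen_row p Hp). pose proof (abs_eigen_row_le p c Hp Hle).
  pose proof (y_super p Hp). pose proof (y_pos p Hp).
  assert (Rabs lam * (c * y p) <= rho * (c * y p)) by (rewrite <- Hup; nra).
  apply (Rmult_le_reg_r (c * y p)); nra.
Qed.

(* Equality forces [|u|] to be proportional to [y]: every term of the maximal
   row counts, since the off-diagonal entries of [A] are positive. *)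
Lemma abs_eigen_eq_rho_tight :
  Rabs lam = rho -> forall k, (k < n)%nat -> sumR n (fun l => A k l * y l) = rho * y k.
Proof.
  intros Hlam.
  destruct eigen_ratio_max as (p & c & Hp & Hc & Hup & Hle).
  assert (Hprop : forall l, (l < n)%nat -> Rabs (u l) = c * y l).
  { pose proof (abs_eigen_row p Hp). pose proof (abs_eigen_row_le p c Hp Hle).
    pose proof (y_super p Hp).
    assert (Heq : sumR n (fun l => A p l * Rabs (u l)) = sumR n (fun l => A p l * (c * y l))).
    { rewrite (sumR_ext n (fun l => A p l * (c * y l)) (fun l => c * (A p l * y l)))
        by (intros; ring).
      rewrite sumR_scal. nra. }
    intros l Hl. destruct (Nat.eq_dec l p) as [->|Hlp]; [exact Hup|].
    assert (A p l * Rabs (u l) = A p l * (c * y l)).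
    { refine (sumR_le_eq n _ _ _ Heq l Hl). intros l' Hl'.
      pose proof (A_nonneg p l' Hp Hl'). pose proof (Hle l' Hl'). nra. }
    pose proof (A_offdiag_pos p l Hp Hl (not_eq_sym Hlp)).
    apply (Rmult_eq_reg_l (A p l)); lra. }
  intros k Hk.
  assert (Hrow : sumR n (fun l => A k l * Rabs (u l)) = c * sumR n (fun l => A k l * y l)).
  { rewrite <- sumR_scal. apply sumR_ext. intros l Hl. rewrite Hprop by exact Hl. ring. }
  pose proof (abs_eigen_row k Hk) as Hrow_k.
  rewrite Hprop, Hlam, Hrow in Hrow_k by exact Hk.
  apply Rle_antisym; [exact (y_super k Hk)|].
  apply (Rmult_le_reg_l c); lra.
Qed.

End Eigenvector.

Lemma eigenvalue_abs_le_supervector lam : eigenvalue n A lam -> Rabs lam <= rho.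
Proof. intros (u & Hu & Heig). exact (abs_eigen_le_rho lam u Hu Heig). Qed.

Lemma eigenvalue_abs_eq_supervector_tight lam :
  eigenvalue n A lam -> Rabs lam = rho ->
  forall k, (k < n)%nat -> sumR n (fun l => A k l * y l) = rho * y k.
Proof. intros (u & Hu & Heig). exact (abs_eigen_eq_rho_tight lam u Hu Heig). Qed.

End Supervector.

Definition diag_add (d : nat -> R) (w : nat -> nat -> R) (k l : nat) : R :=
  (if Nat.eqb k l then d k else 0) + w k l.

Lemma diag_add_diag d w k : diag_add d w k k = d k + w k k.
Proof. unfold diag_add. rewrite Nat.eqb_refl. reflexivity. Qed.

Lemma diag_add_offdiag d w k l : k <> l -> diag_add d w k l = w k l.
Proof. intros Hkl. unfold diag_add. destruct (Nat.eqb_spec k l); [contradiction | ring]. Qed.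

Definition gap_sum (s : nat -> R) (i : nat) : R := sumR i (fun k => s k - s i).

Definition rho_bound (s : nat -> R) (M N : R) (i : nat) : R :=
  (s i + M - N + sqrt ((s i - M + N) ^ 2 + 4 * N * gap_sum s i)) / 2.

Definition excess (s : nat -> R) (M N : R) (i l : nat) : R :=
  if (l <? i)%nat then (s l - s i) / (rho_bound s M N i - M + N) else 0.

Set Implicit Arguments.
Record row_sum_setting (n : nat) (d : nat -> R) (w : nat -> nat -> R)
    (s : nat -> R) (M N : R) : Prop := {
  row_sum : forall k, (k < n)%nat -> d k + sumR n (w k) = s k;
  diag_nonneg : forall k, (k < n)%nat -> 0 <= d k;
  diag_le : forall k, (k < n)%nat -> d k <= M;
  offdiag_zero : forall k, (k < n)%nat -> w k k = 0;
  offdiag_pos : forall k l, (k < n)%nat -> (l < n)%nat -> k <> l -> 0 < w k l;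
  offdiag_le : forall k l, (k < n)%nat -> (l < n)%nat -> k <> l -> w k l <= N;
  row_sum_antitone : forall a b, (a <= b)%nat -> (b < n)%nat -> s b <= s a;
  N_pos : 0 < N;
  M_le_row_sum0 : M <= s 0%nat
}.
Unset Implicit Arguments.

Definition bound_equality_cond (n i : nat) (d : nat -> R) (w : nat -> nat -> R)
    (s : nat -> R) (M N : R) : Prop :=
  (forall k, (k < n)%nat -> s k = s 0%nat) \/
  (exists t, (1 <= t)%nat /\ (t <= i)%nat /\
     (forall k, (k < t)%nat -> d k = M) /\
     (forall k l, (k < n)%nat -> (l < t)%nat -> k <> l -> w k l = N) /\
     (forall k, (t <= k)%nat -> (k < n)%nat -> s k = s t)).

Section TestVector.

Variables (n i : nat) (d : nat -> R) (w : nat -> nat -> R) (s : nat -> R) (M N : R).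
Hypothesis hS : row_sum_setting n d w s M N.
Hypothesis Hi : (i < n)%nat.

Let B := diag_add d w.
Let rho := rho_bound s M N i.
Let e := excess s M N i.

Lemma gap_sum_nonneg : 0 <= gap_sum s i.
Proof.
  apply sumR_nonneg. intros k Hk.
  assert (s i <= s k) by (apply (row_sum_antitone hS); lia). lra.
Qed.

(* [rho] is the larger root of [(x - s_i)(x - M + N) = N * gap_sum s i]. *)
Lemma rho_bound_root :
  0 < rho - M + N /\ (rho - s i) * (rho - M + N) = N * gap_sum s i.
Proof.
  pose proof gap_sum_nonneg as HS. pose proof (N_pos hS) as HN.
  unfold rho, rho_bound.
  set (a := s i - M + N). set (X := a ^ 2 + 4 * N * gap_sum s i).
  assert (HX : 0 <= X) by (unfold X; nra).
  pose proof (sqrt_sqrt X HX). pose proof (sqrt_pos X).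
  split.
  - destruct (Rlt_dec 0 a) as [Ha|Ha]; [unfold a in *; lra|].
    assert (Hi0 : i <> 0%nat).
    { intros ->. pose proof (M_le_row_sum0 hS). unfold a in Ha. lra. }
    assert (s 0%nat - s i <= gap_sum s i).
    { apply (sumR_ge_term i (fun k => s k - s i)); [|lia].
      intros k Hk. assert (s i <= s k) by (apply (row_sum_antitone hS); lia). lra. }
    assert (0 < gap_sum s i) by (pose proof (M_le_row_sum0 hS); unfold a in Ha; lra).
    assert (a ^ 2 < X) by (unfold X; nra).
    assert (- a < sqrt X) by nra.
    unfold a in *. lra.
  - unfold X, a in *. nra.
Qed.

Lemma excess_nonneg l : 0 <= e l.
Proof.
  destruct rho_bound_root as [Hpos _].
  unfold e, excess; fold rho. destruct (Nat.ltb_spec l i); [|lra].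
  assert (s i <= s l) by (apply (row_sum_antitone hS); lia).
  apply Rmult_le_pos; [lra | left; apply Rinv_0_lt_compat; lra].
Qed.

Lemma excess_sum : N * sumR n e = rho - s i.
Proof.
  destruct rho_bound_root as [Hpos Hroot].
  rewrite (sumR_prefix n i); [| lia |].
  2:{ intros l Hl. unfold e, excess. destruct (Nat.ltb_spec l i); [lia | reflexivity]. }
  rewrite (sumR_ext i _ (fun l => / (rho - M + N) * (s l - s i))).
  2:{ intros l Hl. unfold e, excess; fold rho. destruct (Nat.ltb_spec l i); [|lia].
      unfold Rdiv. ring. }
  rewrite sumR_scal. fold (gap_sum s i).
  rewrite Rmult_comm, Rmult_assoc, (Rmult_comm _ N), <- Hroot. field. lra.
Qed.

Lemma excess_gap k :
  (k < n)%nat -> s k - s i <= (rho - M + N) * e k /\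
  ((k < i)%nat -> s k - s i = (rho - M + N) * e k).
Proof.
  intros Hk. destruct rho_bound_root as [Hpos _].
  unfold e, excess; fold rho. destruct (Nat.ltb_spec k i) as [Hki|Hki].
  - assert (s k - s i = (rho - M + N) * ((s k - s i) / (rho - M + N)))
      by (field; lra).
    split; [lra | auto].
  - assert (s k <= s i) by (apply (row_sum_antitone hS); lia).
    split; [lra | intros; lia].
Qed.

(* Bounds [B k l * e l] using [B k l <= N] off the diagonal and [B k k <= M]. *)
Definition majorant (k l : nat) : R :=
  N * e l + (if Nat.eqb k l then (M - N) * e k else 0).

Lemma majorant_ge k l :
  (k < n)%nat -> (l < n)%nat -> B k l * e l <= majorant k l.
Proof.
  intros Hk Hl. pose proof (excess_nonneg l).
  unfold B, diag_add, majorant. destruct (Nat.eqb_spec k l) as [<-|Hkl].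
  - rewrite (offdiag_zero hS Hk). pose proof (diag_le hS Hk). nra.
  - pose proof (offdiag_le hS Hk Hl Hkl). nra.
Qed.

Lemma row_slack k :
  (k < n)%nat ->
  rho * (1 + e k) - sumR n (fun l => B k l * (1 + e l)) =
  sumR n (fun l => majorant k l - B k l * e l) +
  ((rho - M + N) * e k - (s k - s i)).
Proof.
  intros Hk.
  rewrite (sumR_ext n _ (fun l => B k l + B k l * e l)) by (intros; ring).
  rewrite sumR_plus, sumR_minus.
  assert (Hrow : sumR n (B k) = s k).
  { unfold B, diag_add. rewrite sumR_plus, sumR_kronecker by exact Hk.
    apply (row_sum hS Hk). }
  assert (Hmaj : sumR n (majorant k) = N * sumR n e + (M - N) * e k).
  { unfold majorant. rewrite sumR_plus, sumR_scal, sumR_kronecker by exact Hk.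
    reflexivity. }
  rewrite Hrow, Hmaj, excess_sum. ring.
Qed.

Lemma row_slack_terms_nonneg k :
  (k < n)%nat ->
  (forall l, (l < n)%nat -> 0 <= majorant k l - B k l * e l) /\
  0 <= (rho - M + N) * e k - (s k - s i).
Proof.
  intros Hk. split.
  - intros l Hl. pose proof (majorant_ge k l Hk Hl). lra.
  - destruct (excess_gap k Hk). lra.
Qed.

Lemma test_vector_super k :
  (k < n)%nat -> sumR n (fun l => B k l * (1 + e l)) <= rho * (1 + e k).
Proof.
  intros Hk. pose proof (row_slack k Hk) as Hsl.
  destruct (row_slack_terms_nonneg k Hk) as [Ht Hg].
  pose proof (sumR_nonneg n _ Ht). lra.
Qed.

Lemma test_vector_row_tight k :
  (k < n)%nat ->
  sumR n (fun l => B k l * (1 + e l)) = rho * (1 + e k) <->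
  (forall l, (l < n)%nat -> B k l * e l = majorant k l) /\
  s k - s i = (rho - M + N) * e k.
Proof.
  intros Hk. pose proof (row_slack k Hk) as Hsl.
  destruct (row_slack_terms_nonneg k Hk) as [Ht Hg].
  pose proof (sumR_nonneg n _ Ht). split.
  - intros Heq. split; [|lra].
    intros l Hl.
    assert (Hzero : sumR n (fun l => majorant k l - B k l * e l) = 0) by lra.
    pose proof (sumR_nonneg_eq0 n _ Ht Hzero l Hl). lra.
  - intros [Hterms Hgap].
    assert (sumR n (fun l => majorant k l - B k l * e l) = 0).
    { rewrite <- (sumR_const0 n). apply sumR_ext.
      intros l Hl. rewrite Hterms by exact Hl. ring. }
    lra.
Qed.

Lemma tight_rows_equality_cond :
  (forall k, (k < n)%nat -> sumR n (fun l => B k l * (1 + e l)) = rho * (1 + e k)) ->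
  bound_equality_cond n i d w s M N.
Proof.
  intros Htight.
  assert (T := fun k Hk => proj1 (test_vector_row_tight k Hk) (Htight k Hk)).
  destruct rho_bound_root as [Hpos _].
  destruct (exists_least (fun t => s t = s i) i eq_refl) as (t & Hti & Hst & Hmin).
  assert (Hepos : forall l, (l < t)%nat -> 0 < e l).
  { intros l Hl. assert (s i <= s l) by (apply (row_sum_antitone hS); lia).
    assert (s l <> s i) by (apply Hmin, Hl).
    unfold e, excess; fold rho. destruct (Nat.ltb_spec l i); [|lia].
    apply Rdiv_pos_pos; lra. }
  assert (Htail : forall k, (t <= k)%nat -> (k < n)%nat -> s k = s i).
  { intros k Htk Hk. destruct (le_lt_dec i k).
    - destruct (T k Hk) as [_ Hgap]. unfold e, excess in Hgap.
      destruct (Nat.ltb_spec k i); [lia|]. lra.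
    - assert (s k <= s t) by (apply (row_sum_antitone hS); lia).
      assert (s i <= s k) by (apply (row_sum_antitone hS); lia). lra. }
  destruct (Nat.eq_dec t 0) as [Ht0|Ht0].
  - left. intros k Hk. rewrite (Htail k), (Htail 0%nat) by lia. reflexivity.
  - right. exists t. repeat split; [lia | exact Hti | | |].
    + intros k Hk. assert (Hkn : (k < n)%nat) by lia.
      destruct (T k Hkn) as [Hterm _]. specialize (Hterm k Hkn).
      pose proof (Hepos k Hk). unfold B, majorant in Hterm.
      rewrite diag_add_diag, (offdiag_zero hS Hkn), Nat.eqb_refl in Hterm.
      apply (Rmult_eq_reg_r (e k)); lra.
    + intros k l Hk Hl Hkl. destruct (T k Hk) as [Hterm _].
      specialize (Hterm l ltac:(lia)). pose proof (Hepos l Hl).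
      unfold B, majorant in Hterm. rewrite diag_add_offdiag in Hterm by exact Hkl.
      destruct (Nat.eqb_spec k l); [contradiction|].
      apply (Rmult_eq_reg_r (e l)); lra.
    + intros k Htk Hk. rewrite (Htail k), (Htail t) by lia. reflexivity.
Qed.

Lemma equality_cond_tight_rows :
  bound_equality_cond n i d w s M N ->
  forall k, (k < n)%nat -> sumR n (fun l => B k l * (1 + e l)) = rho * (1 + e k).
Proof.
  intros Hcond.
  assert (Ht : exists t, (t <= i)%nat /\ (forall k, (k < t)%nat -> d k = M) /\
    (forall k l, (k < n)%nat -> (l < t)%nat -> k <> l -> w k l = N) /\
    (forall k, (t <= k)%nat -> (k < n)%nat -> s k = s i)).
  { destruct Hcond as [Hconst | (t & _ & Hti & Hd & Hw & Hs)].
    - exists 0%nat. repeat split; try (intros; lia).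
      intros k _ Hk. rewrite (Hconst k Hk), (Hconst i Hi). reflexivity.
    - exists t. repeat split; auto.
      intros k Htk Hk. rewrite (Hs k), (Hs i) by lia. reflexivity. }
  destruct Ht as (t & Hti & Hd & Hw & Hs).
  assert (Hezero : forall l, (t <= l)%nat -> e l = 0).
  { intros l Htl. unfold e, excess. destruct (Nat.ltb_spec l i); [|reflexivity].
    rewrite (Hs l) by lia. unfold Rdiv. ring. }
  intros k Hk. apply test_vector_row_tight; [exact Hk | split].
  - intros l Hl. unfold B, majorant. destruct (Nat.eq_dec k l) as [<-|Hkl].
    + rewrite diag_add_diag, (offdiag_zero hS Hk), Nat.eqb_refl.
      destruct (lt_dec k t); [rewrite Hd by assumption | rewrite Hezero by lia]; ring.
    + rewrite diag_add_offdiag by exact Hkl. destruct (Nat.eqb_spec k l); [contradiction|].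
      destruct (lt_dec l t); [rewrite Hw by assumption | rewrite Hezero by lia]; ring.
  - destruct (lt_dec k i).
    + apply (excess_gap k Hk). assumption.
    + rewrite (Hs k), Hezero by lia. ring.
Qed.

Lemma diag_add_nonneg k l : (k < n)%nat -> (l < n)%nat -> 0 <= B k l.
Proof.
  intros Hk Hl. unfold B. destruct (Nat.eq_dec k l) as [<-|Hkl].
  - rewrite diag_add_diag, (offdiag_zero hS Hk). pose proof (diag_nonneg hS Hk). lra.
  - rewrite diag_add_offdiag by exact Hkl. left. exact (offdiag_pos hS Hk Hl Hkl).
Qed.

Lemma diag_add_offdiag_pos k l : (k < n)%nat -> (l < n)%nat -> k <> l -> 0 < B k l.
Proof.
  intros Hk Hl Hkl. unfold B. rewrite diag_add_offdiag by exact Hkl.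
  exact (offdiag_pos hS Hk Hl Hkl).
Qed.

Lemma test_vector_pos k : (k < n)%nat -> 0 < 1 + e k.
Proof. intros _. pose proof (excess_nonneg k). lra. Qed.

Lemma eigenvalue_abs_le_rho_bound lam : eigenvalue n B lam -> Rabs lam <= rho.
Proof.
  apply (eigenvalue_abs_le_supervector n B (fun l => 1 + e l)).
  - exact diag_add_nonneg.
  - exact test_vector_pos.
  - exact test_vector_super.
Qed.

Lemma eigenvalue_abs_eq_rho_bound lam :
  eigenvalue n B lam -> Rabs lam = rho -> bound_equality_cond n i d w s M N.
Proof.
  intros Heig Habs. apply tight_rows_equality_cond.
  apply (eigenvalue_abs_eq_supervector_tight n B (fun l => 1 + e l) rho
           diag_add_nonneg diag_add_offdiag_pos test_vector_pos test_vector_super lam Heig Habs).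
Qed.

Lemma rho_bound_eigenvalue :
  bound_equality_cond n i d w s M N -> eigenvalue n B rho.
Proof.
  intros Hcond. exists (fun l => 1 + e l). split.
  - exists i. split; [exact Hi|]. pose proof (test_vector_pos i Hi). lra.
  - exact (equality_cond_tight_rows Hcond).
Qed.

End TestVector.

Lemma Rpower_pos x a : 0 < Rpower x a.
Proof. apply exp_pos. Qed.

Lemma eigenvalue_diag_similar n (A A' : nat -> nat -> R) (c : nat -> R) lam :
  (forall k, 0 < c k) -> (forall k l, A' k l = A k l * c l / c k) ->
  eigenvalue n A lam <-> eigenvalue n A' lam.
Proof.
  intros Hc HA'. split.
  - intros (x & (k0 & Hk0 & Hx0) & Heig). exists (fun l => x l / c l). split.
    + exists k0. split; [exact Hk0|]. pose proof (Hc k0).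
      intros Hz. apply Hx0. apply (Rmult_eq_reg_r (/ c k0)); [|apply Rinv_neq_0_compat; lra].
      rewrite Rmult_0_l. exact Hz.
    + intros k Hk. pose proof (Hc k).
      rewrite (sumR_ext n _ (fun l => / c k * (A k l * x l))).
      * rewrite sumR_scal, Heig by exact Hk. field. lra.
      * intros l Hl. rewrite HA'. pose proof (Hc l). field. lra.
  - intros (x & (k0 & Hk0 & Hx0) & Heig). exists (fun l => c l * x l). split.
    + exists k0. split; [exact Hk0|]. pose proof (Hc k0).
      intros Hz. apply Rmult_integral in Hz. destruct Hz; lra.
    + intros k Hk. pose proof (Hc k).
      rewrite (sumR_ext n _ (fun l => c k * (A' k l * x l))).
      * rewrite sumR_scal, Heig by exact Hk. ring.
      * intros l Hl. rewrite HA'. field. lra.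
Qed.

Lemma fold_Rmax_ge_init l x : x <= fold_right Rmax x l.
Proof. induction l as [|y l IH]; simpl; [lra|]. eapply Rle_trans; [exact IH | apply Rmax_r]. Qed.

Lemma fold_Rmax_ge_in l x y : In y l -> y <= fold_right Rmax x l.
Proof.
  induction l as [|z l IH]; simpl; [tauto|]. intros [->|Hy]; [apply Rmax_l|].
  eapply Rle_trans; [apply IH, Hy | apply Rmax_r].
Qed.

Lemma fold_Rmax_le l x c : x <= c -> (forall y, In y l -> y <= c) -> fold_right Rmax x l <= c.
Proof. induction l as [|z l IH]; simpl; intros Hx Hl; [exact Hx|]. apply Rmax_lub; auto. Qed.

Lemma dist_aux_ge n adj i j k fuel : (k <= dist_aux n adj i j k fuel)%nat.
Proof.
  revert k; induction fuel as [|fuel IH]; intros k; simpl; [lia|].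
  destruct (reach n adj k i j); [lia|]. specialize (IH (S k)). lia.
Qed.

Lemma dist_diag n adj i : (1 <= n)%nat -> Defs.dist n adj i i = 0%nat.
Proof. intros Hn. unfold Defs.dist. destruct n; [lia|]. simpl. rewrite Nat.eqb_refl. reflexivity. Qed.

(* Walks of length 0 join only equal vertices, so the search for [Defs.dist i j]
   starts with a failure whenever [i <> j], connected graph or not. *)
Lemma dist_offdiag_ge1 n adj i j : (1 <= n)%nat -> i <> j -> (1 <= Defs.dist n adj i j)%nat.
Proof.
  intros Hn Hij. unfold Defs.dist. destruct n; [lia|]. simpl.
  destruct (Nat.eqb_spec i j); [contradiction|]. apply dist_aux_ge.
Qed.

Section DistanceMatrix.

Variables (n : nat) (adj : nat -> nat -> bool) (alpha : R).

Lemma trans_nonneg k : 0 <= trans n adj k.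
Proof. apply sumR_nonneg. intros; apply pos_INR. Qed.

Lemma wratio_nonneg k l : 0 <= wratio n adj alpha k l.
Proof.
  unfold wratio. pose proof (Rpower_pos (trans n adj l) alpha).
  pose proof (Rpower_pos (trans n adj k) alpha). pose proof (pos_INR (Defs.dist n adj k l)).
  apply Rmult_le_pos; [nra | left; apply Rinv_0_lt_compat; lra].
Qed.

Lemma wratio_offdiag_pos k l : (1 <= n)%nat -> k <> l -> 0 < wratio n adj alpha k l.
Proof.
  intros Hn Hkl. unfold wratio. pose proof (Rpower_pos (trans n adj l) alpha).
  pose proof (Rpower_pos (trans n adj k) alpha).
  pose proof (le_INR _ _ (dist_offdiag_ge1 n adj k l Hn Hkl)). simpl in *.
  apply Rdiv_pos_pos; nra.
Qed.

Lemma wratio_diag k : (1 <= n)%nat -> wratio n adj alpha k k = 0.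
Proof. intros Hn. unfold wratio. rewrite dist_diag by exact Hn. simpl. unfold Rdiv. ring. Qed.

Lemma maxTr_ge k : (k < n)%nat -> trans n adj k <= maxTr n adj.
Proof. intros Hk. apply fold_Rmax_ge_in, in_map, in_seq. lia. Qed.

Lemma maxRatio_ge k l :
  (k < n)%nat -> (l < n)%nat -> k <> l -> wratio n adj alpha k l <= maxRatio n adj alpha.
Proof.
  intros Hk Hl Hkl. apply fold_Rmax_ge_in, in_flat_map. exists k.
  split; [apply in_seq; lia|]. apply in_map, filter_In. split; [apply in_seq; lia|].
  destruct (Nat.eqb_spec k l); [contradiction | reflexivity].
Qed.

Lemma DQ_similar k l :
  diag_add (trans n adj) (wratio n adj alpha) k l =
  DQ n adj k l * Rpower (trans n adj l) alpha / Rpower (trans n adj k) alpha.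
Proof.
  unfold diag_add, DQ, wratio. pose proof (Rpower_pos (trans n adj k) alpha).
  destruct (Nat.eqb_spec k l) as [<-|]; field; lra.
Qed.

Lemma distance_row_sum_setting :
  (2 <= n)%nat ->
  (forall i j, (i <= j)%nat -> (j < n)%nat -> sval n adj alpha j <= sval n adj alpha i) ->
  row_sum_setting n (trans n adj) (wratio n adj alpha) (sval n adj alpha)
    (maxTr n adj) (maxRatio n adj alpha).
Proof.
  intros Hn Hsorted.
  assert (Htr_le_s0 : forall k, (k < n)%nat -> trans n adj k <= sval n adj alpha 0%nat).
  { intros k Hk. assert (sval n adj alpha k <= sval n adj alpha 0%nat) by (apply Hsorted; lia).
    assert (0 <= genavg n adj alpha k) by (apply sumR_nonneg; intros; apply wratio_nonneg).
    unfold sval in *. lra. }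
  split.
  - intros k _. apply Rplus_comm.
  - intros k _. apply trans_nonneg.
  - exact maxTr_ge.
  - intros k _. apply wratio_diag. lia.
  - intros k l _ _ Hkl. apply wratio_offdiag_pos; [lia | exact Hkl].
  - exact maxRatio_ge.
  - exact Hsorted.
  - eapply Rlt_le_trans; [apply (wratio_offdiag_pos 0 1); lia | apply fold_Rmax_ge_init].
  - apply fold_Rmax_le; [apply Htr_le_s0; lia|].
    intros y Hy. apply in_map_iff in Hy. destruct Hy as [k [<- Hk]].
    apply in_seq in Hk. apply Htr_le_s0. lia.
Qed.

End DistanceMatrix.

Theorem theorem7 (n : nat) (adj : nat -> nat -> bool) (alpha : R) (r : R) :
  (2 <= n)%nat ->
  simple_graph n adj ->
  connected n adj ->
  (forall i j, (i <= j)%nat -> (j < n)%nat ->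
     sval n adj alpha j <= sval n adj alpha i) ->
  is_spectral_radius n (DQ n adj) r ->
  forall i, (i < n)%nat ->
    r <= bound7 n adj alpha i /\
    (r = bound7 n adj alpha i <->
      ((forall k, (k < n)%nat -> sval n adj alpha k = sval n adj alpha 0) \/
       (exists t, (1 <= t)%nat /\ (t <= i)%nat /\
          (forall k, (k < t)%nat -> trans n adj k = maxTr n adj) /\
          (forall k l, (k < n)%nat -> (l < t)%nat -> k <> l ->
             wratio n adj alpha k l = maxRatio n adj alpha) /\
          (forall k, (t <= k)%nat -> (k < n)%nat ->
             sval n adj alpha k = sval n adj alpha t)))).
Proof.
  intros Hn _ _ Hsorted [[lam0 [Heig0 Habs0]] Hmax] i Hi.
  pose proof (distance_row_sum_setting n adj alpha Hn Hsorted) as hS.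
  assert (Hsim : forall lam, eigenvalue n (DQ n adj) lam <->
            eigenvalue n (diag_add (trans n adj) (wratio n adj alpha)) lam).
  { intros lam. apply eigenvalue_diag_similar with (c := fun l => Rpower (trans n adj l) alpha).
    - intros k. apply Rpower_pos.
    - apply DQ_similar. }
  change (bound7 n adj alpha i) with
    (rho_bound (sval n adj alpha) (maxTr n adj) (maxRatio n adj alpha) i).
  apply Hsim in Heig0. subst r. split; [|split].
  - exact (eigenvalue_abs_le_rho_bound _ _ _ _ _ _ _ hS Hi lam0 Heig0).
  - exact (eigenvalue_abs_eq_rho_bound _ _ _ _ _ _ _ hS Hi lam0 Heig0).
  - intros Hcond.
    pose proof (rho_bound_eigenvalue _ _ _ _ _ _ _ hS Hi Hcond) as Hrho.
    apply Hsim, Hmax in Hrho.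
    pose proof (Rle_abs (rho_bound (sval n adj alpha) (maxTr n adj) (maxRatio n adj alpha) i)).
    apply Rle_antisym; [exact (eigenvalue_abs_le_rho_bound _ _ _ _ _ _ _ hS Hi lam0 Heig0) | lra].
Qed.
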